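(* For every positive integer $n$ and every prime $p$, there exists $k_0$ such that for every integer $k\ge k_0$ the number $np^k$ satisfies Condition 1 with $p$ and another prime; that is, there is a prime $q\neq p$ such that for every integer $j$ with $1\le j\le np^k-1$, the binomial coefficient $\binom{np^k}{j}$ is divisible by $p$ or by $q$.
   Context: A positive integer $N$ satisfies Condition 1 with primes $p$ and $q$ if for all integers $j$ with $1\le j\le N-1$ the binomial coefficient $\binom{N}{j}$ is divisible by at least one of $p$ or $q$. *)

From mathcomp Require Import all_boot.
Set Implicit Arguments. Unset Strict Implicit. Unset Printing Implicit Defensive.

Definition condition1 (N p q : nat) : Prop :=
  forall j : nat, 1 <= j <= N - 1 -> (p %| 'C(N, j)) || (q %| 'C(N, j)).

From mathcomp Require Import all_boot zify.

(* Put N = n p^k.  By Kummer's theorem p divides binom(N, j) unless p^k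
   divides j, i.e. j = i p^k with 0 < i < n.  For a prime q with q-part q^t
   of N - 1, q divides binom(N, j) as soon as subtracting j from N borrows
   at the digit of q^t, i.e. N mod q^t = 1 < j mod q^t.  Since q^t is
   coprime to p^k, the residue j mod q^t is 0 or 1 only if q^t divides i or
   n - i, which is impossible once q^t >= n.  Such a q exists as soon as
   N - 1 > (n-1)!, since a number all of whose prime-power parts are at
   most n - 1 divides (n-1)!. *)

Lemma logn_fact_upto p n B : prime p -> n < B ->
  logn p n`! = \sum_(1 <= k < B) n %/ p ^ k.
Proof.
move=> p_pr lt_nB; rewrite logn_fact // [RHS](big_cat_nat (n := n.+1)) //=.
rewrite [X in _ + X]big1_seq ?addn0 // => k /andP[_].
rewrite mem_index_iota => /andP[lt_nk _]; apply: divn_small.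
exact: leq_trans lt_nk (ltnW (ltn_expl _ (prime_gt1 p_pr))).
Qed.

(* Kummer: the p-adic valuation of binom(n, j) counts the borrows of n - j. *)
Lemma logn_bin p n j : prime p -> j <= n ->
  logn p 'C(n, j) = \sum_(1 <= k < n.+1) (n %% p ^ k < j %% p ^ k).
Proof.
move=> p_pr le_jn; have p_gt0 := prime_gt0 p_pr.
have := congr1 (logn p) (bin_fact le_jn).
rewrite !lognM ?muln_gt0 ?fact_gt0 ?bin_gt0 //.
rewrite !(@logn_fact_upto p _ n.+1) ?ltnS ?leq_subr // -big_split /=.
have split_quo k : n %/ p ^ k
    = (j %/ p ^ k + (n - j) %/ p ^ k) + (n %% p ^ k < j %% p ^ k).
  have pk_gt0 : 0 < p ^ k by rewrite expn_gt0 p_gt0.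
  by rewrite -{1 3}(subnK le_jn) divnD // leqDmod // [j %/ _ + _]addnC.
rewrite (eq_bigr _ (fun k _ => split_quo k)) !big_split /=.
by rewrite [logn p _ + _]addnC => /addnI.
Qed.

Lemma prime_dvdn_bin_borrow p t n j : prime p -> j <= n ->
  n %% p ^ t < j %% p ^ t -> p %| 'C(n, j).
Proof.
move=> p_pr le_jn borrow.
have t_gt0 : 0 < t by case: t borrow => [|t]; rewrite ?expn0 ?modn1.
have le_tn : t <= n.
  rewrite leqNgt; apply/negP => lt_nt.
  have lt_n_pt : n < p ^ t := ltn_trans lt_nt (ltn_expl _ (prime_gt1 p_pr)).
  have lt_j_pt : j < p ^ t := leq_ltn_trans le_jn lt_n_pt.
  by move: borrow; rewrite !modn_small // ltnNge le_jn.
rewrite -(expn1 p) pfactor_dvdn ?bin_gt0 // logn_bin //.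
rewrite (bigD1_seq t) ?mem_index_iota ?iota_uniq ?ltnS ?t_gt0 ?le_tn //=.
by rewrite borrow.
Qed.

Lemma prime_dvdn_bin_ndvd p k n j : prime p -> p ^ k %| n -> j <= n ->
  ~~ (p ^ k %| j) -> p %| 'C(n, j).
Proof.
move=> p_pr pk_dvd_n le_jn pk_ndvd_j.
apply: (@prime_dvdn_bin_borrow p k) => //.
by move: pk_dvd_n; rewrite /dvdn => /eqP->; rewrite lt0n.
Qed.

Lemma prime_dvdn_bin_mul q t n X i : prime q -> 0 < X ->
  q ^ t %| (n * X).-1 -> coprime (q ^ t) X -> n <= q ^ t -> 0 < i < n ->
  q %| 'C(n * X, i * X).
Proof.
move=> q_pr X_gt0 M_dvd coMX le_nM /andP[i_gt0 lt_in].
set M := q ^ t in M_dvd coMX le_nM *.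
have M_gt1 : 1 < M by lia.
have le_iX_nX : i * X <= n * X by rewrite leq_mul2r ltnW ?orbT.
have N_mod : n * X %% M = 1.
  rewrite -(prednK (n := n * X)) ?muln_gt0 ?X_gt0 ?andbT; last by lia.
  by rewrite -addn1 -(divnK M_dvd) modnMDl modn_small.
apply: (@prime_dvdn_bin_borrow q t) => //; rewrite N_mod -/M ltnNge.
apply/negP => le_iX_mod.
have [iX_mod0 | iX_mod1] : (i * X %% M == 0) \/ (i * X %% M == 1) by lia.
- have : M %| i by rewrite -(Gauss_dvdl _ coMX) /dvdn.
  by move/(dvdn_leq i_gt0); lia.
- have : M %| (n - i) * X by rewrite mulnBl -eqn_mod_dvd // N_mod (eqP iX_mod1).
  by rewrite (Gauss_dvdl _ coMX) => /dvdn_leq; lia.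
Qed.

Lemma fact_lt_part_gt m d : m`! < d -> exists2 q, q \in primes d & m < d`_q.
Proof.
move=> lt_fact_d; have d_gt0 : 0 < d by lia.
have : ~~ all (fun q : nat => d`_q %| m`!) (primes d).
  apply/negP => /allP small_parts.
  have /(dvdn_leq (fact_gt0 m)) : d %| m`! by apply/dvdn_partP.
  by rewrite leqNgt lt_fact_d.
case/allPn => q q_d d_q_ndvd; exists q => //.
by rewrite ltnNge; apply: contra d_q_ndvd => le_part; rewrite dvdn_fact ?part_gt0.
Qed.

Theorem mainTheorem1 :
  forall (n p : nat), 0 < n -> prime p ->
  exists k0 : nat, forall k : nat, k0 <= k ->
    exists q : nat, [/\ prime q, q != p & condition1 (n * p ^ k) p q].
Proof.
move=> n p n_gt0 p_pr; exists (n.-1)`!.+1 => k le_k0_k.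
set X := p ^ k; set N := n * X.
have X_gt0 : 0 < X by rewrite expn_gt0 prime_gt0.
have lt_kX : k < X := ltn_expl _ (prime_gt1 p_pr).
have le_XN : X <= N by rewrite leq_pmull.
have [q] := @fact_lt_part_gt n.-1 N.-1 ltac:(lia).
rewrite mem_primes => /and3P[q_pr _ q_dvd_Npred] lt_n_part.
have q_neq_p : q != p.
  apply: contraTneq q_dvd_Npred => ->; apply/negP => p_dvd_Npred.
  have p_dvd_N : p %| N by rewrite /N /X dvdn_mull // dvdn_exp //; lia.
  have N_eq : N.-1 + 1 = N by lia.
  move: p_dvd_N; rewrite -N_eq dvdn_addr // dvdn1 => /eqP p_eq1.
  by rewrite p_eq1 in p_pr.
have coMX : coprime (q ^ logn q N.-1) X.
  by rewrite coprimeXl // coprimeXr // prime_coprime // dvdn_prime2.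
exists q; split => // j /andP[j_gt0 le_j_N1].
have le_jN : j <= N by lia.
have [/dvdnP[i j_eq] | X_ndvd_j] := boolP (X %| j); last first.
  by rewrite (@prime_dvdn_bin_ndvd p k) ?dvdn_mull.
subst j; apply/orP; right; apply: (@prime_dvdn_bin_mul q (logn q N.-1)) => //.
- exact: pfactor_dvdnn.
- by rewrite -p_part; lia.
- have i_gt0 : 0 < i by move: j_gt0; rewrite muln_gt0 => /andP[].
  by rewrite i_gt0 -(ltn_pmul2r X_gt0) -/N; lia.
Qed.
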